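(* Let $K$ be a field, $q\in K\setminus\{0\}$ not a root of unity, and let $A=K\langle a,b\rangle/(ab-qba)$ be the coordinate ring of the quantum plane. Let $w=ab$ (a normal element), and let $\sigma$ be the automorphism of $A$ with $\sigma(a)=q^{-1}a$, $\sigma(b)=qb$, so that $wy=\sigma(y)w$ for all $y\in A$. Let $J=A(ab-1)$ and $x=a-1$. Then: (a) $J$ is a maximal left ideal of $A$, and for every $m\ge 0$ there is no $c\in A$ with $\sigma^m(x)c-1\in J$; (b) the left $A$-module $N=A/Ax$ is not artinian, and its nonzero submodules are exactly the modules $w^mN$, $m\ge 0$, which form a strictly descending chain $N\supsetneq wN\supsetneq w^2N\supsetneq\cdots$. *)

From HB Require Import structures.
From mathcomp Require Import all_boot all_order all_algebra.
Set Implicit Arguments. Unset Strict Implicit. Unset Printing Implicit Defensive.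
Import Order.TTheory GRing.Theory Num.Theory.
Local Open Scope ring_scope.

(* The quantum plane A = K<a,b>/(ab - q ba), presented via its PBW basis
   a^i b^j.  An element  sum_{i,j} c_{ij} a^i b^j  is stored as the
   bivariate polynomial  sum_i (sum_j c_{ij} Y^j) X^i  in {poly {poly K}}
   (outer variable = a, inner variable = b); this representation is
   canonical, so Leibniz equality is equality in A.  Addition, negation,
   0 and 1 are those of {poly {poly K}}; the (noncommutative) product is
   qmul, determined by  (a^i b^j)(a^k b^l) = q^{-jk} a^{i+k} b^{j+l}
   (equivalently  ba = q^{-1} ab, i.e. ab - q ba = 0). *)

Section QuantumPlane.
Variables (K : fieldType) (q : K).

Definition qp := {poly {poly K}}.

Definition qmono (c : K) (i j : nat) : qp := (c *: 'X^j)%:P * 'X^i.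

Definition qcoef (p : qp) (i j : nat) : K := (p`_i)`_j.

Definition qmul (p r : qp) : qp :=
  \sum_(i < size p) \sum_(j < size p`_i) \sum_(k < size r) \sum_(l < size r`_k)
     qmono (qcoef p i j * qcoef r k l * q ^- (j * k)) (i + k) (j + l).

Definition qa : qp := qmono 1 1 0.
Definition qb : qp := qmono 1 0 1.

Definition qpow (y : qp) (m : nat) : qp := iter m (qmul y) 1.

(* the automorphism sigma: a |-> q^-1 a, b |-> q b, i.e.
   a^i b^j |-> q^(j - i) a^i b^j *)
Definition qsigma (p : qp) : qp :=
  \sum_(i < size p) \sum_(j < size p`_i)
     qmono (qcoef p i j * q ^ (j%:Z - i%:Z)) i j.

Definition left_ideal (I : qp -> Prop) : Prop :=
  I 0 /\ (forall x y, I x -> I y -> I (x - y)) /\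
  (forall r x, I x -> I (qmul r x)).

Definition maximal_left_ideal (I : qp -> Prop) : Prop :=
  left_ideal I /\ ~ I 1 /\
  (forall L : qp -> Prop, left_ideal L -> (forall y, I y -> L y) ->
     (forall y, L y <-> I y) \/ L 1).

Definition lprincipal (g : qp) : qp -> Prop := fun y => exists c, y = qmul c g.

(* Submodules of the cyclic left module N = A/Ax are represented by their
   full preimages in A, i.e. left ideals L of A containing Ax. *)
Definition quot_submodule (x : qp) (L : qp -> Prop) : Prop :=
  left_ideal L /\ (forall y, lprincipal x y -> L y).

Definition quot_nonzero (x : qp) (L : qp -> Prop) : Prop :=
  exists y, L y /\ ~ lprincipal x y.

Definition quot_artinian (x : qp) : Prop :=
  forall L : nat -> qp -> Prop,
    (forall n, quot_submodule x (L n)) ->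
    (forall n y, L n.+1 y -> L n y) ->
    exists n, forall m, (n <= m)%N -> forall y, L m y <-> L n y.

(* preimage in A of the submodule w^m N of N = A/Ax *)
Definition quot_wpow (w x : qp) (m : nat) : qp -> Prop :=
  fun y => exists u v, y = qmul (qpow w m) u + qmul v x.

End QuantumPlane.

From HB Require Import structures.
From mathcomp Require Import all_boot all_order all_algebra.
From mathcomp Require Import zify ring.
From Stdlib Require Import Classical.
Set Implicit Arguments. Unset Strict Implicit. Unset Printing Implicit Defensive.
Import Order.TTheory GRing.Theory Num.Theory.
Local Open Scope ring_scope.

(* Both
   parts rest on a K-linear "coordinate" map A -> (I -> K) with finitely
   supported values which is left A-semilinear in a controlled way:

   - for N = A/Ax, [ncoord p n] is the coefficient of b^n of the image of p
     under the isomorphism N ~ K[b] (a^i b^j |-> q^(ij) b^j); its kernel is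
     exactly Ax, and left multiplication by a acts diagonally with the
     pairwise distinct eigenvalues q^n;
   - for A/J, [jcoord p z] is the coefficient of the weight z = i - j; its
     kernel is exactly J, and left multiplication by w acts diagonally with
     the pairwise distinct eigenvalues q^(-z).

   A Vandermonde-type argument ([isolate_component]) shows that a left
   ideal containing p also contains an element whose coordinates are those
   of p at a single index.  Hence every submodule of N is spanned by the
   powers b^n it contains, which identifies the nonzero submodules with the
   w^m N, and every left ideal strictly above J contains a monomial, which is
   invertible modulo J.  Finally (sigma^m x) c = 1 mod J would give a finitely
   supported solution of a first-order recurrence with a delta right-hand
   side, which does not exist ([no_finite_solution]). *)

Section QuantumPlaneArithmetic.
Variables (K : fieldType) (q : K).
Local Notation qp := (qp K).
Local Notation qm := (qmul q).

Definition qsum (T : zmodType) (F : K -> nat -> nat -> T) (p : qp) : T :=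
  \sum_(i < size p) \sum_(j < size p`_i) F (qcoef p i j) i j.

Definition qdeg (p : qp) : nat := \max_(i < size p) size (p`_i)%R.

Lemma qdegP (p : qp) i : (size (p`_i)%R <= qdeg p)%N.
Proof.
case: (ltnP i (size p)) => hi.
  by apply: (@leq_bigmax_cond _ _ _ (Ordinal hi)).
by rewrite nth_default // size_poly0.
Qed.

Lemma qcoef_out (p : qp) i j : (size p <= i)%N -> qcoef p i j = 0.
Proof. by move=> h; rewrite /qcoef (nth_default _ h) coef0. Qed.

Lemma qcoef_out2 (p : qp) i j : (qdeg p <= j)%N -> qcoef p i j = 0.
Proof. by move=> h; rewrite /qcoef nth_default //; apply: leq_trans (qdegP p i) h. Qed.

Lemma qsum_widen (T : zmodType) (F : K -> nat -> nat -> T) (p : qp) N M :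
  (forall i j, F 0 i j = 0) -> (size p <= N)%N -> (qdeg p <= M)%N ->
  qsum F p = \sum_(i < N) \sum_(j < M) F (qcoef p i j) i j.
Proof.
move=> F0 hN hM; rewrite /qsum.
rewrite (big_ord_widen N (fun i => \sum_(j < size p`_i) F (qcoef p i j) i j) hN).
rewrite big_mkcond /=; apply: eq_bigr => i _.
case: ifP => hi.
  rewrite (big_ord_widen M (fun j => F (qcoef p i j) i j) (leq_trans (qdegP p i) hM)).
  rewrite big_mkcond /=; apply: eq_bigr => j _.
  by case: ifP => // hj; rewrite /qcoef nth_default ?F0 // leqNgt hj.
by rewrite big1 // => j _; rewrite qcoef_out ?F0 // leqNgt hi.
Qed.

Lemma qsumD (T : zmodType) (F : K -> nat -> nat -> T) (p r : qp) :
  (forall i j, F 0 i j = 0) -> (forall c d i j, F (c + d) i j = F c i j + F d i j) ->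
  qsum F (p + r) = qsum F p + qsum F r.
Proof.
move=> F0 FD.
pose N := (size p + size r + size (p + r)%R)%N.
pose M := (qdeg p + qdeg r + qdeg (p + r)%R)%N.
rewrite !(@qsum_widen _ _ _ N M) //; try (rewrite /N /M; lia).
rewrite -big_split; apply: eq_bigr => i _; rewrite -big_split; apply: eq_bigr => j _.
by rewrite /qcoef coefD coefD FD.
Qed.

Lemma qsum0 (T : zmodType) (F : K -> nat -> nat -> T) : qsum F 0 = 0.
Proof. by rewrite /qsum size_poly0 big_ord0. Qed.

Lemma qsumF (T : zmodType) (F G : K -> nat -> nat -> T) (p : qp) :
  qsum (fun c i j => F c i j + G c i j) p = qsum F p + qsum G p.
Proof. by rewrite /qsum -big_split; apply: eq_bigr => i _; rewrite -big_split. Qed.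

Lemma qsum_ext (T : zmodType) (F G : K -> nat -> nat -> T) (p : qp) :
  (forall c i j, F c i j = G c i j) -> qsum F p = qsum G p.
Proof. by move=> h; rewrite /qsum; apply: eq_bigr => i _; apply: eq_bigr => j _. Qed.

Lemma qsum_zero (T : zmodType) (F : K -> nat -> nat -> T) p :
  (forall c i j, F c i j = 0) -> qsum F p = 0.
Proof. by move=> h; rewrite /qsum big1 // => i _; rewrite big1. Qed.

Lemma qsumZ (F : K -> nat -> nat -> K) (a : K) p :
  qsum (fun c i j => a * F c i j) p = a * qsum F p.
Proof. by rewrite /qsum mulr_sumr; apply: eq_bigr => i _; rewrite mulr_sumr. Qed.

Lemma qcoef_qmono (c : K) i j i' j' :
  qcoef (qmono c i j) i' j' = if (i' == i) && (j' == j) then c else 0.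
Proof.
rewrite /qcoef /qmono mulrC coefXnM.
case: ltnP => hi.
  by rewrite coef0; case: eqP => // ?; subst; rewrite ltnn in hi.
rewrite coefC; case: (eqVneq i' i) => [->|ne].
  by rewrite subnn eqxx /= coefZ coefXn; case: eqP => _; rewrite ?mulr1 ?mulr0.
have : (i' - i != 0)%N by rewrite subn_eq0 -ltnNge ltn_neqAle eq_sym ne hi.
by move/negbTE => ->; rewrite coef0 /=.
Qed.

Lemma qmono0 i j : qmono (0 : K) i j = 0.
Proof. by rewrite /qmono scale0r mul0r. Qed.

Lemma qmonoD (c d : K) i j : qmono (c + d) i j = qmono c i j + qmono d i j.
Proof. by rewrite /qmono scalerDl polyCD mulrDl. Qed.

Lemma qmonoN (c : K) i j : qmono (- c) i j = - qmono c i j.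
Proof. by apply/eqP; rewrite -addr_eq0 -qmonoD addNr qmono0. Qed.

Lemma size_qmono (c : K) i j : (size (qmono c i j) <= i.+1)%N.
Proof.
rewrite /qmono; apply: leq_trans (size_polyMleq _ _) _.
by rewrite size_polyXn; case: (size _) (size_polyC_leq1 (c *: 'X^j)) => [|[|]].
Qed.

Lemma qdeg_qmono (c : K) i j : (qdeg (qmono c i j) <= j.+1)%N.
Proof.
apply/bigmax_leqP => -[k _] _ /=.
rewrite /qmono mulrC coefXnM; case: ltnP => _; first by rewrite size_poly0.
rewrite coefC; case: eqP => _; last by rewrite size_poly0.
by apply: leq_trans (size_scale_leq _ _) _; rewrite size_polyXn.
Qed.

Lemma qsum_qmono (T : zmodType) (F : K -> nat -> nat -> T) (c : K) i j :
  (forall i j, F 0 i j = 0) -> qsum F (qmono c i j) = F c i j.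
Proof.
move=> F0; rewrite (@qsum_widen _ _ _ i.+1 j.+1) ?size_qmono ?qdeg_qmono //.
rewrite (bigD1 (Ordinal (ltnSn i))) //= [X in _ + X]big1 => [|k hk]; last first.
  rewrite big1 // => l _; rewrite qcoef_qmono.
  by move: hk; rewrite -val_eqE /= => /negbTE -> /=; rewrite F0.
rewrite addr0 (bigD1 (Ordinal (ltnSn j))) //= [X in _ + X]big1 => [|l hl].
  by rewrite qcoef_qmono !eqxx addr0.
by rewrite qcoef_qmono eqxx; move: hl; rewrite -val_eqE /= => /negbTE -> /=; rewrite F0.
Qed.

Lemma sum_delta (T : zmodType) n k (F : nat -> T) :
  \sum_(j < n) (if k == j :> nat then F j else 0) = if (k < n)%N then F k else 0.
Proof.
rewrite -(big_ord1_eq +%R F k n) [RHS]big_mkcond; apply: eq_bigr => j _.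
by rewrite eq_sym.
Qed.

Lemma qcoef_qsum (F : K -> nat -> nat -> qp) p i' j' :
  qcoef (qsum F p) i' j' = qsum (fun c i j => qcoef (F c i j) i' j') p.
Proof.
rewrite /qcoef /qsum !coef_sum; apply: eq_bigr => i _.
by rewrite !coef_sum.
Qed.

Lemma qdecomp (p : qp) : qsum (@qmono K) p = p.
Proof.
apply/polyP => i'; apply/polyP => j'.
rewrite -[LHS]/(qcoef _ i' j') -[RHS]/(qcoef _ i' j') qcoef_qsum.
rewrite (@qsum_widen _ _ _ (size p + i'.+1) (qdeg p + j'.+1)); last 3 first.
- by move=> i j; rewrite qmono0 /qcoef coef0 coef0.
- by rewrite leq_addr.
- by rewrite leq_addr.
under eq_bigr do under eq_bigr do rewrite qcoef_qmono.
transitivity (\sum_(i < size p + i'.+1) (if i' == i then qcoef p i j' else 0)).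
  apply: eq_bigr => i _; case: eqP => [<-|_] /=; last by rewrite big1.
  rewrite (sum_delta _ _ (fun j => qcoef p i' j)).
  by case: ltnP => // h; rewrite qcoef_out2 //; move: h; lia.
rewrite (sum_delta _ _ (fun i => qcoef p i j')); case: ltnP => // h.
by rewrite qcoef_out //; move: h; lia.
Qed.

Lemma qind (P : qp -> Prop) :
  P 0 -> (forall p r, P p -> P r -> P (p + r)) ->
  (forall c i j, P (qmono c i j)) -> forall p, P p.
Proof.
move=> P0 PD Pm p; rewrite -(qdecomp p) /qsum.
by apply: big_ind => // i _; apply: big_ind.
Qed.

Lemma qmulE (p r : qp) : qm p r =
  qsum (fun c i j => qsum (fun c' k l => qmono (c * c' * q ^- (j * k)) (i + k) (j + l)) r) p.
Proof. by []. Qed.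

Lemma qmulDl (p1 p2 r : qp) : qm (p1 + p2) r = qm p1 r + qm p2 r.
Proof.
rewrite !qmulE qsumD //.
- by move=> i j; apply: qsum_zero => c k l; rewrite !mul0r qmono0.
- move=> c d i j; rewrite -qsumF; apply: qsum_ext => c' k l.
  by rewrite !mulrDl qmonoD.
Qed.

Lemma qmulDr (p r1 r2 : qp) : qm p (r1 + r2) = qm p r1 + qm p r2.
Proof.
rewrite !qmulE -qsumF; apply: qsum_ext => c i j; rewrite qsumD //.
- by move=> k l; rewrite mulr0 mul0r qmono0.
- by move=> c1 d k l; rewrite mulrDr mulrDl qmonoD.
Qed.

Lemma qmul0l (r : qp) : qm 0 r = 0.
Proof. by rewrite qmulE qsum0. Qed.

Lemma qmul0r (p : qp) : qm p 0 = 0.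
Proof. by rewrite qmulE; apply: qsum_zero => c i j; rewrite qsum0. Qed.

Lemma qmul_mono (c c' : K) i j k l :
  qm (qmono c i j) (qmono c' k l) = qmono (c * c' * q ^- (j * k)) (i + k) (j + l).
Proof.
rewrite qmulE qsum_qmono; last by move=> i' j'; apply: qsum_zero => ? ? ?; rewrite !mul0r qmono0.
by rewrite qsum_qmono // => k' l'; rewrite mulr0 mul0r qmono0.
Qed.

Lemma qmulNl (p r : qp) : qm (- p) r = - qm p r.
Proof. by apply/eqP; rewrite -addr_eq0 -qmulDl addNr qmul0l. Qed.

Lemma qmulNr (p r : qp) : qm p (- r) = - qm p r.
Proof. by apply/eqP; rewrite -addr_eq0 -qmulDr addNr qmul0r. Qed.

Lemma qmulBl (p1 p2 r : qp) : qm (p1 - p2) r = qm p1 r - qm p2 r.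
Proof. by rewrite qmulDl qmulNl. Qed.

Lemma qmulBr (p r1 r2 : qp) : qm p (r1 - r2) = qm p r1 - qm p r2.
Proof. by rewrite qmulDr qmulNr. Qed.

Lemma qmulA (p r s : qp) : qm (qm p r) s = qm p (qm r s).
Proof.
elim/qind: p r s => [|p1 p2 h1 h2|c i j] r s.
- by rewrite !qmul0l.
- by rewrite !qmulDl h1 h2.
elim/qind: r s => [|r1 r2 h1 h2|c' k l] s.
- by rewrite qmul0r qmul0l qmul0r.
- by rewrite qmulDr !qmulDl qmulDr h1 h2.
elim/qind: s => [|s1 s2 h1 h2|c'' u v].
- by rewrite !qmul0r.
- by rewrite !qmulDr h1 h2.
rewrite !qmul_mono !addnA; congr qmono.
rewrite -!mulrA; congr (_ * (_ * _)); rewrite mulrCA; congr (_ * _).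
by rewrite -!invfM -!exprD; congr (_^-1); congr (_ ^+ _); lia.
Qed.

Lemma qone : (1 : qp) = qmono 1 0 0.
Proof. by rewrite /qmono scale1r !expr0 mulr1. Qed.

Lemma qmul1r (p : qp) : qm p 1 = p.
Proof.
elim/qind: p => [|p1 p2 h1 h2|c i j]; first by rewrite qmul0l.
  by rewrite qmulDl h1 h2.
by rewrite qone qmul_mono muln0 expr0 invr1 !mulr1 !addn0.
Qed.

Lemma qmul_sumr (p : qp) n (F : 'I_n -> qp) :
  qm p (\sum_(k < n) F k) = \sum_(k < n) qm p (F k).
Proof. by rewrite (big_morph (qm p) (qmulDr p) (qmul0r p)). Qed.

Lemma qmul_scalar (c c' : K) i j : qm (qmono c 0 0) (qmono c' i j) = qmono (c * c') i j.
Proof. by rewrite qmul_mono mul0n expr0 invr1 mulr1. Qed.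

Lemma polyC_qsum (s : {poly K}) : (s%:P : qp) = \sum_(k < size s) qmono s`_k 0 k.
Proof.
rewrite -{1}(coefK s) poly_def raddf_sum /=; apply: eq_bigr => k _.
by rewrite /qmono expr0 mulr1.
Qed.

Lemma qw_mono : qm (qa K) (qb K) = qmono 1 1 1.
Proof. by rewrite /qa /qb qmul_mono mul0n expr0 invr1 !mulr1. Qed.

Lemma lprincipal_left_ideal (g : qp) : left_ideal q (lprincipal q g).
Proof.
split; first by exists 0; rewrite qmul0l.
split; first by move=> y1 y2 [c1 ->] [c2 ->]; exists (c1 - c2); rewrite qmulBl.
by move=> r y [c ->]; exists (qm r c); rewrite qmulA.
Qed.

Lemma left_idealD (L : qp -> Prop) y1 y2 :
  left_ideal q L -> L y1 -> L y2 -> L (y1 + y2).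
Proof.
move=> [L0 [LB _]] h1 h2.
by have := LB _ _ h1 (LB _ _ L0 h2); rewrite sub0r opprK.
Qed.

(* Then a left ideal containing p also
   contains an element whose coordinates are those of p at the single index
   z0 (apply the products of the operators g - lam t, t <> z0). *)
Lemma isolate_component (I : eqType) (F : qp -> I -> K) (lam : I -> K) (g : qp)
    (L : qp -> Prop) :
  injective lam -> left_ideal q L ->
  (forall p r z, F (p - r) z = F p z - F r z) ->
  (forall c p z, F (qm (qmono c 0 0) p) z = c * F p z) ->
  (forall p z, F (qm g p) z = lam z * F p z) ->
  forall (s : seq I) p z0, L p -> (forall z, z \notin s -> F p z = 0) ->
  exists2 p', L p' & forall z, F p' z = if z == z0 then F p z0 else 0.
Proof.
move=> lam_inj [_ [LB LM]] FB FZ Fg s p z0 Lp hs.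
suff : forall s p, L p -> (forall z, z \notin z0 :: s -> F p z = 0) ->
    exists2 p', L p' & forall z, F p' z = if z == z0 then F p z0 else 0.
  by apply; [exact: Lp | move=> z; rewrite inE negb_or => /andP[_]; exact: hs].
clear s p Lp hs; elim=> [|t s IH] p Lp hs.
  exists p => // z; case: eqP => [->//|/eqP nz].
  by apply: hs; rewrite !inE (negbTE nz).
case: (eqVneq t z0) => [et|ntz].
  apply: IH Lp _ => z hz; apply: hs; move: hz; rewrite !inE et.
  by case: (z == z0).
pose p1 := qm g p - qm (qmono (lam t) 0 0) p.
have Fp1 : forall z, F p1 z = (lam z - lam t) * F p z.
  by move=> z; rewrite FB Fg FZ mulrBl.
have [p2 Lp2 Fp2] : exists2 p2, L p2 &
    forall z, F p2 z = if z == z0 then F p1 z0 else 0.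
  apply: IH; first by apply: LB; apply: LM.
  move=> z hz; rewrite Fp1; case: (eqVneq z t) => [->|nzt]; first by rewrite subrr mul0r.
  by rewrite hs ?mulr0 //; move: hz; rewrite !inE !negb_or nzt => /andP[-> ->].
have nt : lam z0 - lam t != 0 by rewrite subr_eq0 (inj_eq lam_inj) eq_sym.
exists (qm (qmono (lam z0 - lam t)^-1 0 0) p2); first exact: LM.
move=> z; rewrite FZ Fp2 Fp1; case: eqP => _; last by rewrite mulr0.
by rewrite mulrA mulVf ?mul1r.
Qed.

End QuantumPlaneArithmetic.

Lemma least_witness (P : nat -> Prop) n0 :
  P n0 -> exists m, P m /\ forall k, P k -> (m <= k)%N.
Proof.
elim: n0 {-2}n0 (leqnn n0) => [|N IH] n hn Pn.
  by exists n; split => // k _; move: hn; rewrite leqn0 => /eqP ->.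
case: (classic (exists k, (k < n)%N /\ P k)) => [[k [hk Pk]]|nk].
  by apply: (IH k) => //; lia.
exists n; split => // k Pk; rewrite leqNgt; apply/negP => hkn; apply: nk; by exists k.
Qed.

Lemma finite_support_bound (s : seq int) :
  exists N : nat, forall z : int, (N <= `|z|)%N -> z \notin s.
Proof.
elim: s => [|t s [N hN]]; first by exists 0%N.
exists (maxn N `|t|.+1) => z hz; rewrite inE negb_or hN; last first.
  exact: leq_trans (leq_maxl _ _) hz.
by rewrite andbT; apply/eqP => e; move: hz; rewrite e geq_max ltnn andbF.
Qed.

(* For d <> 0 the recurrence d f(z-1) - f(z) = [z = 0] has no finitely
   supported solution f : int -> K: it forces f(k) = d^k f(0) for k >= 0 and
   f(-1) = d^k f(-1-k), so f(0) = f(-1) = 0, contradicting the case z = 0. *)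
Lemma no_finite_solution (K : fieldType) (d : K) (f : int -> K) (s : seq int) :
  d != 0 -> (forall z, z \notin s -> f z = 0) ->
  ~ (forall z, d * f (z - 1) - f z = if z == 0 then 1 else 0).
Proof.
move=> d0 hs hf.
have step : forall z, z != 0 -> f z = d * f (z - 1).
  by move=> z /negbTE hz; have /eqP := hf z; rewrite hz subr_eq0 => /eqP.
have fpos : forall k : nat, f k%:Z = d ^+ k * f 0.
  elim=> [|k IH]; first by rewrite expr0 mul1r.
  have -> : k.+1%:Z = k%:Z + 1 by lia.
  by rewrite step ?addrK ?IH ?exprS ?mulrA //; lia.
have fneg : forall k : nat, f (-1) = d ^+ k * f (- k%:Z - 1).
  elim=> [|k IH]; first by rewrite expr0 mul1r.
  rewrite IH step; last by lia.
  by rewrite exprSr -mulrA; congr (_ * (_ * f _)); lia.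
have [N hN] := finite_support_bound s.
have f0 : f 0 = 0.
  have := fpos N; rewrite hs ?hN //= => /esym /eqP.
  by rewrite mulf_eq0 expf_eq0 (negbTE d0) andbF => /eqP.
have fm1 : f (-1) = 0.
  by rewrite (fneg N) hs ?mulr0 //; apply: hN; lia.
have := hf 0; rewrite sub0r fm1 f0 mulr0 subrr eqxx /= => /esym/eqP.
by rewrite oner_eq0.
Qed.

Section QuantumPlaneModules.
Variables (K : fieldType) (q : K).
Hypothesis hq0 : q != 0.
Hypothesis hqr : forall n : nat, (0 < n)%N -> q ^+ n != 1.
Local Notation qp := (qp K).
Local Notation qm := (qmul q).
Local Notation xa := (qa K - 1).
Local Notation W := (qm (qa K) (qb K)).
Local Notation J := (lprincipal q (W - 1)).

Lemma qexpz_eq1 (z : int) : q ^ z = 1 -> z = 0.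
Proof.
case: z => n.
  rewrite -exprnP => h; case: (posnP n) => [->//|hp].
  by have := hqr hp; rewrite h eqxx.
rewrite NegzE -exprnN => /eqP; rewrite invr_eq1 => /eqP h.
by have := hqr (ltn0Sn n); rewrite h eqxx.
Qed.

Lemma qexpz_inj : injective (fun z : int => q ^ z).
Proof.
move=> z1 z2 /= e; apply/eqP; rewrite -subr_eq0; apply/eqP/qexpz_eq1.
by rewrite expfzDr // e -expfzDr // subrr expr0z.
Qed.

Lemma qexp_inj : injective (fun n : nat => q ^+ n).
Proof.
by move=> m n /= e; have [] : m%:Z = n%:Z by apply: qexpz_inj; rewrite /= -!exprnP.
Qed.

(* Coordinates on N = A/Ax ~ K[b]: a^i b^j |-> q^(ij) b^j. *)
Definition ncoord (p : qp) (n : nat) : K :=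
  qsum (fun c i j => if j == n then c * q ^+ (i * j) else 0) p.

Lemma ncoordD p r n : ncoord (p + r) n = ncoord p n + ncoord r n.
Proof.
rewrite /ncoord qsumD // => [i j|c d i j]; first by case: eqP; rewrite ?mul0r.
by case: eqP; rewrite ?mulrDl ?addr0.
Qed.

Lemma ncoord0 n : ncoord 0 n = 0.
Proof. by rewrite /ncoord qsum0. Qed.

Lemma ncoordB p r n : ncoord (p - r) n = ncoord p n - ncoord r n.
Proof.
rewrite ncoordD; congr (_ + _); apply/eqP.
by rewrite -addr_eq0 -ncoordD addNr ncoord0.
Qed.

Lemma ncoord_mono (c : K) i j n :
  ncoord (qmono c i j) n = if j == n then c * q ^+ (i * j) else 0.
Proof. by rewrite /ncoord qsum_qmono // => i' j'; case: eqP; rewrite ?mul0r. Qed.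

Lemma ncoord_sum m (F : 'I_m -> qp) n :
  ncoord (\sum_(k < m) F k) n = \sum_(k < m) ncoord (F k) n.
Proof. by rewrite (big_morph (ncoord^~ n) (fun p r => ncoordD p r n) (ncoord0 n)). Qed.

Lemma ncoord_supp p : exists s : seq nat, forall n, n \notin s -> ncoord p n = 0.
Proof.
elim/qind: p => [|p r [s1 h1] [s2 h2]|c i j].
- by exists [::] => n _; rewrite ncoord0.
- exists (s1 ++ s2) => n; rewrite mem_cat negb_or => /andP[n1 n2].
  by rewrite ncoordD h1 // h2 // addr0.
- by exists [:: j] => n; rewrite inE ncoord_mono eq_sym => /negbTE ->.
Qed.

Lemma qmul_x_mono (c : K) i j : qm (qmono c i j) xa = qmono (c / q ^+ j) i.+1 j - qmono c i j.
Proof. by rewrite qmulBr qmul1r /qa qmul_mono muln1 addn1 addn0 mulr1. Qed.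

Lemma ncoord_Ax v n : ncoord (qm v xa) n = 0.
Proof.
elim/qind: v => [|p r hp hr|c i j]; first by rewrite qmul0l ncoord0.
  by rewrite qmulDl ncoordD hp hr addr0.
rewrite qmul_x_mono ncoordB !ncoord_mono; case: eqP => _; last by rewrite subrr.
rewrite mulSn exprD; apply/eqP; rewrite subr_eq0; apply/eqP; field.
by rewrite expf_neq0.
Qed.

(* ... and every element is congruent modulo Ax to the polynomial in b
   given by its coordinates, since a^i b^j = q^(ij) b^j mod Ax. *)
Lemma mono_mod_Ax (c : K) i j :
  exists v, qmono c i j = qmono (c * q ^+ (i * j)) 0 j + qm v xa.
Proof.
elim: i c => [|i IH] c; first by exists 0; rewrite qmul0l addr0 mul0n expr0 mulr1.
have [v hv] := IH c; set d := c * q ^+ (i * j).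
exists (qmono (d * q ^+ j) 0 j + qm (qa K) v).
have -> : qmono c i.+1 j = qm (qa K) (qmono c i j).
  by rewrite /qa qmul_mono mul0n expr0 invr1 !mulr1 mul1r add0n add1n.
rewrite hv qmulDr qmulDl -qmulA /qa qmul_mono qmul_x_mono.
rewrite mul0n expr0 invr1 !mulr1 mul1r add0n add1n.
have -> : d * q ^+ j / q ^+ j = d by field; rewrite expf_neq0.
have -> : c * q ^+ (i.+1 * j) = d * q ^+ j.
  by rewrite /d mulSn exprD -mulrA [q ^+ (i * j) * _]mulrC.
by rewrite [RHS]addrCA addrA subrK.
Qed.

Lemma ncoord_mod_Ax p :
  exists v (s : {poly K}), p = s%:P + qm v xa /\ forall n, s`_n = ncoord p n.
Proof.
elim/qind: p => [|p r [v1 [s1 [e1 h1]]] [v2 [s2 [e2 h2]]]|c i j].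
- exists 0, 0; split; first by rewrite qmul0l addr0.
  by move=> n; rewrite coef0 ncoord0.
- exists (v1 + v2), (s1 + s2); split; first by rewrite {1}e1 {1}e2 qmulDl polyCD addrACA.
  by move=> n; rewrite coefD ncoordD h1 h2.
- have [v hv] := mono_mod_Ax c i j.
  exists v, ((c * q ^+ (i * j)) *: 'X^j); split; first by rewrite hv /qmono expr0 !mulr1.
  move=> n; rewrite coefZ coefXn ncoord_mono eq_sym.
  by case: eqP; rewrite ?mulr1 ?mulr0.
Qed.

Lemma ncoord_ker p : (forall n, ncoord p n = 0) -> lprincipal q xa p.
Proof.
move=> h; have [v [s [e hs]]] := ncoord_mod_Ax p.
have s0 : s = 0 by apply/polyP => n; rewrite hs h coef0.
by exists v; rewrite e s0 add0r.
Qed.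

Lemma ncoord_scalar (c : K) p n : ncoord (qm (qmono c 0 0) p) n = c * ncoord p n.
Proof.
elim/qind: p => [|p r hp hr|c' i j]; first by rewrite qmul0r !ncoord0 mulr0.
  by rewrite qmulDr !ncoordD hp hr mulrDr.
by rewrite qmul_scalar !ncoord_mono; case: eqP; rewrite ?mulr0 ?mulrA.
Qed.

Lemma ncoord_a p n : ncoord (qm (qa K) p) n = q ^+ n * ncoord p n.
Proof.
elim/qind: p => [|p r hp hr|c i j]; first by rewrite qmul0r !ncoord0 mulr0.
  by rewrite qmulDr !ncoordD hp hr mulrDr.
rewrite /qa qmul_mono !ncoord_mono mul0n expr0 invr1 mulr1 mul1r add0n add1n.
by case: eqP => [<-|]; rewrite ?mulr0 // mulSn exprD mulrCA.
Qed.

Lemma qb_mul_bpow n : qm (qb K) (qmono 1 0 n) = qmono 1 0 n.+1.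
Proof. by rewrite /qb qmul_mono muln0 expr0 invr1 !mulr1 add0n add1n. Qed.

Lemma ncoord_bpow n k : ncoord (qmono 1 0 n) k = if n == k then 1 else 0.
Proof. by rewrite ncoord_mono mul0n expr0 mulr1. Qed.

(* p lies in w^m N iff its image in K[b] is divisible by b^m. *)
Definition ncoord_order_ge (m : nat) (p : qp) : Prop :=
  forall n, ncoord p n != 0 -> (m <= n)%N.

Lemma wpow_mono m : exists2 c, c != 0 & qpow q W m = qmono c m m.
Proof.
elim: m => [|m [c c0 hc]]; first by exists 1; [exact: oner_neq0 | exact: qone].
exists (1 * c * q ^- (1 * m)); first by rewrite mul1r mulf_neq0 // invr_neq0 // expf_neq0.
by rewrite /= -/(qpow q _ m) hc qw_mono qmul_mono.
Qed.

Lemma ncoord_wpow_mul (c : K) m u n : (n < m)%N -> ncoord (qm (qmono c m m) u) n = 0.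
Proof.
move=> hnm; elim/qind: u => [|p r hp hr|c' i j]; first by rewrite qmul0r ncoord0.
  by rewrite qmulDr ncoordD hp hr addr0.
by rewrite qmul_mono ncoord_mono ifN //; lia.
Qed.

(* w^m b^k = c' b^(m+k) mod Ax with c' <> 0, so b^n lies in w^m N for n >= m. *)
Lemma bpow_in_wpow m n (e : K) : (m <= n)%N -> quot_wpow q W xa m (qmono e 0 n).
Proof.
move=> hmn; have [c c0 hw] := wpow_mono m.
set d := e / (c * q ^+ (m * n)).
have [v0 hv0] := mono_mod_Ax (c * d) m n.
exists (qmono d 0 (n - m)), (- v0).
rewrite hw qmul_mono muln0 expr0 invr1 mulr1 addn0 subnKC // hv0 qmulNl.
have -> : c * d * q ^+ (m * n) = e by rewrite /d; field; rewrite ?mulf_neq0 ?expf_neq0.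
by rewrite addrK.
Qed.

Lemma quot_wpowE m p : quot_wpow q W xa m p <-> ncoord_order_ge m p.
Proof.
split.
  case=> u [v ->] n; rewrite ncoordD ncoord_Ax addr0.
  have [c _ ->] := wpow_mono m.
  by apply: contraNT; rewrite -ltnNge => h; rewrite ncoord_wpow_mul.
move=> hC; have [v [s [e hs]]] := ncoord_mod_Ax p.
pose S y := quot_wpow q W xa m y.
have SD : forall y1 y2, S y1 -> S y2 -> S (y1 + y2).
  move=> y1 y2 [u1 [v1 ->]] [u2 [v2 ->]]; exists (u1 + u2), (v1 + v2).
  by rewrite (qmulDr _ _ u1) (qmulDl _ v1) addrACA.
rewrite e; apply: (SD); last by exists 0, v; rewrite qmul0r add0r.
rewrite polyC_qsum; apply: (@big_ind _ S); last move=> k _.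
- by exists 0, 0; rewrite qmul0r qmul0l addr0.
- exact: SD.
case: (ltnP k m) => hkm; last exact: bpow_in_wpow.
have -> : s`_k = 0.
  by rewrite hs; case: (eqVneq (ncoord p k) 0) => // /hC; rewrite leqNgt hkm.
by exists 0, 0; rewrite qmono0 qmul0r qmul0l addr0.
Qed.

Lemma submodule_bpow (L : qp -> Prop) p n :
  quot_submodule q xa L -> L p -> ncoord p n != 0 -> L (qmono 1 0 n).
Proof.
move=> [Lid LAx] Lp hn; have [s hs] := ncoord_supp p.
have [p' Lp' e'] := @isolate_component _ _ _ _ _ _ _ qexp_inj Lid ncoordB
  ncoord_scalar ncoord_a s p n Lp hs.
have [v [s' [e hs']]] := ncoord_mod_Ax p'.
have es' : s' = (ncoord p n) *: 'X^n.
  by apply/polyP => k; rewrite hs' e' coefZ coefXn; case: eqP; rewrite ?mulr1 ?mulr0.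
have Lm : L (qmono (ncoord p n) 0 n).
  have [_ [LB _]] := Lid.
  have : L (p' - qm v xa) by apply: LB => //; apply: LAx; exists v.
  by rewrite e addrK es' /qmono expr0 mulr1.
have [_ [_ LM]] := Lid.
by have := LM (qmono (ncoord p n)^-1 0 0) _ Lm; rewrite qmul_scalar mulVf.
Qed.

Lemma submodule_of_bpow (L : qp -> Prop) p :
  quot_submodule q xa L -> (forall n, ncoord p n != 0 -> L (qmono 1 0 n)) -> L p.
Proof.
move=> [Lid LAx] hp; have [v [s [e hs]]] := ncoord_mod_Ax p.
have [L0 [_ LM]] := Lid.
rewrite e; apply: (left_idealD Lid); last by apply: LAx; exists v.
rewrite polyC_qsum; apply: (@big_ind _ L) => //.
  by move=> y1 y2 h1 h2; have := left_idealD Lid h1 h2.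
move=> k _; case: (eqVneq (ncoord p k) 0) => hk0; first by rewrite hs hk0 qmono0.
by have := LM (qmono s`_k 0 0) _ (hp _ hk0); rewrite qmul_scalar mulr1.
Qed.

Lemma ncoord_mul_high r (c : K) k n : (n < k)%N -> ncoord (qm r (qmono c 0 k)) n = 0.
Proof.
move=> hnk; elim/qind: r => [|r1 r2 h1 h2|c' i j]; first by rewrite qmul0l ncoord0.
  by rewrite qmulDl ncoordD h1 h2 addr0.
by rewrite qmul_mono ncoord_mono ifN //; lia.
Qed.

Lemma ncoord_order_mul m r p : ncoord_order_ge m p -> ncoord_order_ge m (qm r p).
Proof.
move=> hp n; apply: contraNT; rewrite -ltnNge => hnm.
have [v [s [e hs]]] := ncoord_mod_Ax p.
rewrite e (qmulDr _ r) ncoordD -qmulA ncoord_Ax addr0 polyC_qsum qmul_sumr ncoord_sum.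
rewrite big1 // => -[k _] _ /=; case: (eqVneq s`_k 0) => [->|].
  by rewrite qmono0 qmul0r ncoord0.
by rewrite hs => /hp hmk; apply: ncoord_mul_high; exact: leq_trans hnm hmk.
Qed.

Lemma wpow_submodule m : quot_submodule q xa (quot_wpow q W xa m).
Proof.
split; [split; [|split]|].
- by apply/quot_wpowE => k; rewrite ncoord0 eqxx.
- move=> y1 y2 /quot_wpowE h1 /quot_wpowE h2; apply/quot_wpowE => k.
  rewrite ncoordB => hk; case: (eqVneq (ncoord y1 k) 0) => [e1|]; last exact: h1.
  by apply: h2; move: hk; rewrite e1 sub0r oppr_eq0.
- by move=> r y /quot_wpowE h; apply/quot_wpowE; exact: ncoord_order_mul.
- by move=> y [v ->]; apply/quot_wpowE => k; rewrite ncoord_Ax eqxx.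
Qed.

(* Classification: a nonzero submodule of N is w^m N, where b^m is the least
   power of b it contains. *)
Lemma nonzero_submodule_wpow (L : qp -> Prop) :
  quot_submodule q xa L -> quot_nonzero q xa L ->
  exists m, forall y, L y <-> quot_wpow q W xa m y.
Proof.
move=> hL [y [Ly ny]].
have [n0 hn0] : exists n, ncoord y n != 0.
  apply: NNPP => hne; apply: ny; apply: ncoord_ker => n; apply/eqP.
  by apply: NNPP => h; apply: hne; exists n; exact/negP.
have [m [Lm mmin]] := least_witness (P := fun n => L (qmono 1 0 n)) (submodule_bpow hL Ly hn0).
have Lup : forall n, (m <= n)%N -> L (qmono 1 0 n).
  move=> n /subnKC <-; elim: (n - m)%N => [|k IH]; first by rewrite addn0.
  have [[_ [_ LM]] _] := hL.
  by rewrite addnS -qb_mul_bpow; apply: LM.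
exists m => p; rewrite quot_wpowE; split.
  by move=> Lp n hn; exact: mmin _ (submodule_bpow hL Lp hn).
by move=> hC; apply: submodule_of_bpow hL _ => n hn; apply: Lup; exact: hC.
Qed.

(* w^(m+1) N is strictly contained in w^m N: b^m separates them. *)
Lemma wpow_strict m :
  (forall y, quot_wpow q W xa m.+1 y -> quot_wpow q W xa m y) /\
  exists y, quot_wpow q W xa m y /\ ~ quot_wpow q W xa m.+1 y.
Proof.
split; first by move=> y /quot_wpowE h; apply/quot_wpowE => n /h /ltnW.
exists (qmono 1 0 m); split; first exact: bpow_in_wpow.
by move/quot_wpowE/(_ m); rewrite ncoord_bpow eqxx oner_neq0 ltnn => /(_ isT).
Qed.

(* w^m N is nonzero: w^m itself is not in Ax. *)
Lemma wpow_nonzero m : quot_nonzero q xa (quot_wpow q W xa m).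
Proof.
have [c c0 hw] := wpow_mono m.
exists (qpow q W m); split; first by exists 1, 0; rewrite qmul1r qmul0l addr0.
move=> [v e]; have := ncoord_Ax v m; rewrite -e hw ncoord_mono eqxx => /eqP.
by rewrite mulf_eq0 (negbTE c0) /= expf_eq0 (negbTE hq0) andbF.
Qed.

Lemma not_artinian : ~ quot_artinian q xa.
Proof.
move=> h; have [n hn] := h _ wpow_submodule (fun m => proj1 (wpow_strict m)).
have [y [hy nhy]] := proj2 (wpow_strict n).
by apply: nhy; apply/(hn n.+1 (leqnSn n) y).
Qed.

Lemma submodule_classification (L : qp -> Prop) :
  quot_submodule q xa L ->
  (quot_nonzero q xa L <-> exists m, forall y, L y <-> quot_wpow q W xa m y).
Proof.
move=> hL; split; first exact: nonzero_submodule_wpow.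
case=> m hm; have [y [wy ny]] := wpow_nonzero m.
by exists y; split => //; apply/hm.
Qed.

(* Coordinates on A/J: a^i b^j |-> q^C(j,2) e_(i-j), graded by the weight i - j. *)
Definition jcoord (p : qp) (z : int) : K :=
  qsum (fun c i j => if i%:Z - j%:Z == z then c * q ^+ 'C(j, 2) else 0) p.

Lemma jcoordD p r z : jcoord (p + r) z = jcoord p z + jcoord r z.
Proof.
rewrite /jcoord qsumD // => [i j|c d i j]; first by case: eqP; rewrite ?mul0r.
by case: eqP; rewrite ?mulrDl ?addr0.
Qed.

Lemma jcoord0 z : jcoord 0 z = 0.
Proof. by rewrite /jcoord qsum0. Qed.

Lemma jcoordB p r z : jcoord (p - r) z = jcoord p z - jcoord r z.
Proof.
rewrite jcoordD; congr (_ + _); apply/eqP.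
by rewrite -addr_eq0 -jcoordD addNr jcoord0.
Qed.

Lemma jcoord_mono (c : K) i j z :
  jcoord (qmono c i j) z = if i%:Z - j%:Z == z then c * q ^+ 'C(j, 2) else 0.
Proof. by rewrite /jcoord qsum_qmono // => i' j'; case: eqP; rewrite ?mul0r. Qed.

Lemma jcoord_one z : jcoord 1 z = if z == 0 then 1 else 0.
Proof. by rewrite qone jcoord_mono subrr eq_sym mul1r. Qed.

Lemma jcoord_supp p : exists s : seq int, forall z, z \notin s -> jcoord p z = 0.
Proof.
elim/qind: p => [|p r [s1 h1] [s2 h2]|c i j].
- by exists [::] => z _; rewrite jcoord0.
- exists (s1 ++ s2) => z; rewrite mem_cat negb_or => /andP[z1 z2].
  by rewrite jcoordD h1 // h2 // addr0.
- by exists [:: i%:Z - j%:Z] => z; rewrite inE jcoord_mono eq_sym => /negbTE ->.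
Qed.

(* The exponent of q gained when passing through one more factor w - 1. *)
Lemma binS2 j : 'C(j.+1, 2) = ('C(j, 2) + j)%N.
Proof. by rewrite binS bin1. Qed.

Lemma qmul_w1_mono (c : K) i j :
  qm (qmono c i j) (W - 1) = qmono (c / q ^+ j) i.+1 j.+1 - qmono c i j.
Proof. by rewrite qmulBr qmul1r qw_mono qmul_mono muln1 !addn1 mulr1. Qed.

Lemma jcoord_J y z : jcoord (qm y (W - 1)) z = 0.
Proof.
elim/qind: y => [|p r hp hr|c i j]; first by rewrite qmul0l jcoord0.
  by rewrite qmulDl jcoordD hp hr addr0.
rewrite qmul_w1_mono jcoordB !jcoord_mono.
have -> : i.+1%:Z - j.+1%:Z = i%:Z - j%:Z by lia.
case: eqP => _; last by rewrite subrr.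
rewrite binS2 exprD; apply/eqP; rewrite subr_eq0; apply/eqP; field.
by rewrite expf_neq0.
Qed.

(* ... and each monomial a^i b^j is congruent modulo J to a multiple of the
   monomial of the same weight with min(i, j) = 0, using ab = 1 mod J. *)
Lemma mono_mod_J (c : K) i j :
  J (qmono c i j - qmono (c * q ^+ 'C(j, 2) / q ^+ 'C(j - i, 2)) (i - j) (j - i)).
Proof.
have [J0 [_ _]] := lprincipal_left_ideal q (W - 1).
elim: i j c => [|i IH] j c.
  by rewrite sub0n subn0 mulfK ?expf_neq0 // subrr.
case: j => [|j]; first by rewrite subn0 sub0n !bin0n /= expr0 invr1 !mulr1 subrr.
rewrite !subSS.
have h1 : J (qmono c i.+1 j.+1 - qmono (c * q ^+ j) i j).
  by exists (qmono (c * q ^+ j) i j); rewrite qmul_w1_mono mulfK ?expf_neq0.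
have := left_idealD (lprincipal_left_ideal q (W - 1)) h1 (IH j (c * q ^+ j)).
rewrite addrA subrK.
by rewrite binS2 exprD [q ^+ 'C(j, 2) * _]mulrC mulrA.
Qed.

Definition jreduce (p : qp) : qp :=
  qsum (fun c i j => qmono (c * q ^+ 'C(j, 2) / q ^+ 'C(j - i, 2)) (i - j) (j - i)) p.

Lemma jreduce_spec p : J (p - jreduce p).
Proof.
have hJ := lprincipal_left_ideal q (W - 1); have [J0 _] := hJ.
elim/qind: p => [|p r hp hr|c i j].
- by rewrite /jreduce qsum0 subrr.
- rewrite /jreduce qsumD.
  + by rewrite opprD addrACA; have := left_idealD hJ hp hr.
  + by move=> i j; rewrite !mul0r qmono0.
  + by move=> c d i j; rewrite !mulrDl qmonoD.
- rewrite /jreduce qsum_qmono; first exact: mono_mod_J.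
  by move=> i' j'; rewrite !mul0r qmono0.
Qed.

Lemma weight_eq i j i' j' : minn i' j' = 0%N ->
  ((i' == i - j)%N && (j' == j - i)%N) = (i%:Z - j%:Z == i'%:Z - j'%:Z).
Proof.
by move=> h; apply/andP/eqP => [[/eqP e1 /eqP e2]|e]; [|split; apply/eqP]; lia.
Qed.

Lemma qcoef_jreduce p i' j' : qcoef (jreduce p) i' j' =
  if minn i' j' == 0%N then (q ^+ 'C(j', 2))^-1 * jcoord p (i'%:Z - j'%:Z) else 0.
Proof.
rewrite /jreduce qcoef_qsum; case: eqP => hmin.
  rewrite /jcoord -qsumZ; apply: qsum_ext => c i j; rewrite qcoef_qmono weight_eq //.
  case: eqP => [e|]; last by rewrite mulr0.
  have -> : (j - i)%N = j' by lia.
  by rewrite mulrC.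
apply: qsum_zero => c i j; rewrite qcoef_qmono.
by case: andP => // -[/eqP e1 /eqP e2]; exfalso; apply: hmin; lia.
Qed.

Lemma jcoord_ker p : (forall z, jcoord p z = 0) -> J p.
Proof.
move=> h; have e : jreduce p = 0.
  apply/polyP => i; apply/polyP => j.
  by rewrite -[LHS]/(qcoef _ i j) qcoef_jreduce h mulr0 !coef0; case: eqP.
by have := jreduce_spec p; rewrite e subr0.
Qed.

Lemma jcoord_scalar (c : K) p z : jcoord (qm (qmono c 0 0) p) z = c * jcoord p z.
Proof.
elim/qind: p => [|p r hp hr|c' i j]; first by rewrite qmul0r !jcoord0 mulr0.
  by rewrite qmulDr !jcoordD hp hr mulrDr.
by rewrite qmul_scalar !jcoord_mono; case: eqP; rewrite ?mulr0 ?mulrA.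
Qed.

Lemma jcoord_w p z : jcoord (qm W p) z = q ^ (- z) * jcoord p z.
Proof.
elim/qind: p => [|p r hp hr|c i j]; first by rewrite qmul0r !jcoord0 mulr0.
  by rewrite qmulDr !jcoordD hp hr mulrDr.
rewrite qw_mono qmul_mono !jcoord_mono.
have -> : (1 + i)%N%:Z - (1 + j)%N%:Z = i%:Z - j%:Z by lia.
case: eqP => [<-|]; last by rewrite mulr0.
have -> : - (i%:Z - j%:Z) = j%:Z + (- i%:Z) by rewrite opprB addrC.
rewrite expfzDr // -exprnN -exprnP add1n binS2 exprD mul1n mul1r.
by field; rewrite expf_neq0.
Qed.

Lemma jcoord_a (d : K) p z : jcoord (qm (qmono d 1 0) p) z = d * jcoord p (z - 1).
Proof.
elim/qind: p => [|p r hp hr|c i j]; first by rewrite qmul0r !jcoord0 mulr0.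
  by rewrite qmulDr !jcoordD hp hr mulrDr.
rewrite qmul_mono !jcoord_mono mul0n expr0 invr1 mulr1 add0n.
have -> : ((1 + i)%N%:Z - j%:Z == z) = (i%:Z - j%:Z == z - 1) by apply/eqP/eqP; lia.
by case: eqP; rewrite ?mulr0 ?mulrA.
Qed.

Lemma qexpNz_inj : injective (fun z : int => q ^ (- z)).
Proof. by move=> z1 z2 /= /qexpz_inj; exact: oppr_inj. Qed.

(* J is proper, since jcoord 1 0 = 1. *)
Lemma J_proper : ~ J 1.
Proof.
case=> c e; have := jcoord_J c 0; rewrite -e jcoord_one eqxx => /eqP.
by rewrite oner_eq0.
Qed.

Lemma left_ideal_above_J_mono (L : qp -> Prop) y :
  left_ideal q L -> (forall y, J y -> L y) -> L y -> ~ J y ->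
  exists i j, L (qmono 1 i j).
Proof.
move=> hL JL Ly nJy.
have [z0 hz0] : exists z, jcoord y z != 0.
  apply: NNPP => hne; apply: nJy; apply: jcoord_ker => z; apply/eqP.
  by apply: NNPP => h; apply: hne; exists z; exact/negP.
have [s hs] := jcoord_supp y.
have [p' Lp' e'] := @isolate_component _ _ _ _ _ _ _ qexpNz_inj hL jcoordB
  jcoord_scalar jcoord_w s y z0 Ly hs.
have [i [j ez]] : exists i j : nat, z0 = i%:Z - j%:Z.
  case: (z0) => n; first by exists n, 0%N; rewrite subr0.
  by exists 0%N, n.+1; rewrite NegzE sub0r.
exists i, j; set c0 := jcoord y z0 in e' hz0.
have JE : J (qm (qmono (q ^+ 'C(j, 2) / c0) 0 0) p' - qmono 1 i j).
  apply: jcoord_ker => z; rewrite jcoordB jcoord_scalar e' jcoord_mono -ez eq_sym.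
  case: eqP => _; last by rewrite mulr0 subrr.
  by apply/eqP; rewrite subr_eq0; apply/eqP; field.
have [_ [LB LM]] := hL.
have := LB _ _ (LM (qmono (q ^+ 'C(j, 2) / c0) 0 0) _ Lp') (JL _ JE).
by rewrite opprB addrC subrK.
Qed.

Lemma mono_invertible_mod_J i j : exists r, J (qm r (qmono 1 i j) - 1).
Proof.
exists (qmono (q ^+ (i * i) / q ^+ 'C(i + j, 2)) j i).
apply: jcoord_ker => z; rewrite jcoordB jcoord_one qmul_mono jcoord_mono.
have -> : (j + i)%N%:Z - (i + j)%N%:Z = 0 by lia.
rewrite eq_sym; case: eqP => _; last by rewrite subrr.
by apply/eqP; rewrite subr_eq0; apply/eqP; field; rewrite ?expf_neq0.
Qed.

Lemma J_maximal : maximal_left_ideal q J.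
Proof.
split; first exact: lprincipal_left_ideal.
split; first exact: J_proper.
move=> L hL JL; case: (classic (exists y, L y /\ ~ J y)) => [[y [Ly nJy]]|nex].
  right; have [i [j Lij]] := left_ideal_above_J_mono hL JL Ly nJy.
  have [r hr] := mono_invertible_mod_J i j; have [_ [LB LM]] := hL.
  by have := LB _ _ (LM r _ Lij) (JL _ hr); rewrite opprB addrC subrK.
left => y; split => [Ly|]; last exact: JL.
by apply: NNPP => nJ; apply: nex; exists y.
Qed.

Lemma qsigmaE p : qsigma q p = qsum (fun c i j => qmono (c * q ^ (j%:Z - i%:Z)) i j) p.
Proof. by []. Qed.

Lemma qsigmaD p r : qsigma q (p + r) = qsigma q p + qsigma q r.
Proof.
rewrite !qsigmaE qsumD //.
- by move=> i j; rewrite mul0r qmono0.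
- by move=> c d i j; rewrite mulrDl qmonoD.
Qed.

Lemma qsigma_mono (c : K) i j : qsigma q (qmono c i j) = qmono (c * q ^ (j%:Z - i%:Z)) i j.
Proof. by rewrite qsigmaE qsum_qmono // => i' j'; rewrite mul0r qmono0. Qed.

Lemma sigma_iter_x m :
  exists2 d : K, d != 0 & iter m (qsigma q) xa = qmono d 1 0 + qmono (-1) 0 0.
Proof.
elim: m => [|m [d d0 hd]]; first by exists 1; [exact: oner_neq0 | rewrite /= qmonoN -qone].
exists (d * q ^ (0%:Z - 1%:Z)); first by rewrite mulf_neq0 // expfz_neq0.
by rewrite /= hd qsigmaD !qsigma_mono subrr expr0z mulr1.
Qed.

(* sigma^m(x) is not left invertible modulo J: the coordinates of c would
   solve d f(z-1) - f(z) = [z = 0] with finite support. *)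
Lemma sigma_x_not_invertible m c : ~ J (qm (iter m (qsigma q) xa) c - 1).
Proof.
move=> [c' e]; have [d d0 hd] := sigma_iter_x m; rewrite hd in e.
have [s hs] := jcoord_supp c.
apply: (no_finite_solution d0 hs) => z.
have := jcoord_J c' z; rewrite -e jcoordB jcoord_one qmulDl jcoordD jcoord_a jcoord_scalar.
by move/eqP; rewrite mulN1r subr_eq0 => /eqP.
Qed.

End QuantumPlaneModules.

Theorem proposition3p2 (K : fieldType) (q : K) :
  q != 0 -> (forall n : nat, (0 < n)%N -> q ^+ n != 1) ->
  let a := qa K in
  let b := qb K in
  let w := qmul q a b in
  let J := lprincipal q (w - 1) in
  let x := a - 1 in
  (* (a) *)
  (maximal_left_ideal q J /\
   forall (m : nat) (c : qp K), ~ J (qmul q (iter m (qsigma q) x) c - 1)) /\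
  (* (b) *)
  (~ quot_artinian q x /\
   (forall L : qp K -> Prop, quot_submodule q x L ->
      (quot_nonzero q x L <-> exists m : nat, forall y, L y <-> quot_wpow q w x m y)) /\
   (forall m : nat,
      (forall y, quot_wpow q w x m.+1 y -> quot_wpow q w x m y) /\
      exists y, quot_wpow q w x m y /\ ~ quot_wpow q w x m.+1 y)).
Proof.
move=> hq0 hqr; cbv zeta.
split; split.
- by apply: J_maximal.
- by move=> m c; apply: sigma_x_not_invertible.
- by apply: not_artinian.
- by split => [L|m]; [apply: submodule_classification | apply: wpow_strict].
Qed.
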